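(* If $T$ is a tree of order $p\ge 3$, then $\gamma_{[3R]}(T)\le \frac{7p}{4}$.
   Context: For a graph $\Gamma=(V,E)$ and $h:V\to\{0,1,2,3,4\}$, let $AN(v)=\{w\in N(v):h(w)\ge 1\}$, $AN[v]=AN(v)\cup\{v\}$ and $h(S)=\sum_{u\in S}h(u)$. $h$ is a triple Roman dominating function (3RDF) if every $v$ with $h(v)<3$ satisfies $h(AN[v])\ge|AN(v)|+3$. The triple Roman domination number $\gamma_{[3R]}(\Gamma)$ is the minimum weight $h(V)$ of a 3RDF of $\Gamma$. *)

From mathcomp Require Import all_boot.
Set Implicit Arguments. Unset Strict Implicit. Unset Printing Implicit Defensive.

Definition simple_graph (T : finType) (e : rel T) : Prop :=
  symmetric e /\ irreflexive e.

Definition connected_graph (T : finType) (e : rel T) : Prop :=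
  forall x y : T, connect e x y.

Definition acyclic_graph (T : finType) (e : rel T) : Prop :=
  forall c : seq T, 3 <= size c -> uniq c -> ~~ cycle e c.

Definition is_tree (T : finType) (e : rel T) : Prop :=
  [/\ simple_graph e, connected_graph e & acyclic_graph e].

Definition labelling (T : finType) := {ffun T -> 'I_5}.

Definition hw (T : finType) (h : labelling T) (S : {set T}) : nat :=
  \sum_(u in S) (h u : nat).

Definition AN (T : finType) (e : rel T) (h : labelling T) (v : T) : {set T} :=
  [set w | e v w & 1 <= (h w : nat)].

Definition ANc (T : finType) (e : rel T) (h : labelling T) (v : T) : {set T} :=
  v |: AN e h v.

Definition is3RDF (T : finType) (e : rel T) (h : labelling T) : bool :=
  [forall v, ((h v : nat) < 3) ==> (#|AN e h v| + 3 <= hw h (ANc e h v))].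

Definition weight (T : finType) (h : labelling T) : nat := hw h setT.

(* Triple Roman domination number: minimum weight of a 3RDF.  The constant
   labelling 4 is always a 3RDF, of weight 4|V|, so 4|V| is a valid default. *)
Definition gamma3R (T : finType) (e : rel T) : nat :=
  \big[minn/4 * #|T|]_(h : labelling T | is3RDF e h) weight h.

From mathcomp Require Import all_boot all_order zify.
Set Implicit Arguments. Unset Strict Implicit. Unset Printing Implicit Defensive.
Import Order.TTheory.

(* Root the graph at a vertex x of degree at least 2 and let d be the distance
   to x.  For each shift r < 4, label v according to the class (d v + r) mod 4
   with the periodic pattern 4|3, 0, 3, 0|1, taking the first alternative when
   v has a child (a neighbour farther from x).  Vertices labelled below 3 are
   exactly those in odd classes; such a vertex is protected by its parent
   (labelled 4, resp. 3 when its own label is 1), by its parent and a child,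
   or, at the root, by two children, all of them in even classes and labelled
   at least 3.  Over the four shifts every vertex receives 4+0+3+0 or 3+0+3+1,
   i.e. 7, so one of these four 3RDFs has weight at most 7p/4. *)

Lemma gamma3R_le (T : finType) (e : rel T) (h : labelling T) :
  is3RDF e h -> gamma3R e <= weight h.
Proof. by move=> h3; rewrite /gamma3R -minEnat -leEnat; apply: bigmin_le_cond. Qed.

Lemma gamma3R_mul_le_sum (T : finType) (e : rel T) n (hs : 'I_n -> labelling T) :
  (forall r, is3RDF e (hs r)) -> n * gamma3R e <= \sum_(r < n) weight (hs r).
Proof.
move=> hs3; rewrite -[n in n * _]card_ord -sum_nat_const.
by apply: leq_sum => r _; apply: gamma3R_le.
Qed.

Lemma card_le2_of_max_degree1 (T : finType) (e : rel T) :
  symmetric e -> connected_graph e -> (forall v a b, e v a -> e v b -> a = b) ->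
  #|T| <= 2.
Proof.
move=> sym conn deg1; case: (pickP T) => [x _|T0]; last by rewrite eq_card0.
pose S := x |: [set v | e x v].
have closedS : closed e S.
  apply: intro_closed => [|u v uv]; first exact: sym_connect_sym.
  rewrite !inE => /predU1P[ux|xu]; first by rewrite -ux uv orbT.
  by rewrite (deg1 u v x uv) ?eqxx // sym.
have nbrs_le1 : #|[set v | e x v]| <= 1.
  by apply/card_le1_eqP => a b; rewrite !inE => xa xb; apply: deg1 xb xa.
have sub : [set: T] \subset S.
  by apply/subsetP => y _; rewrite -(closed_connect closedS (conn x y)) !inE eqxx.
rewrite -cardsT (leq_trans (subset_leq_card sub)) // cardsU1.
exact: leq_add (leq_b1 _) nbrs_le1.
Qed.

Lemma exists_two_neighbours (T : finType) (e : rel T) :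
  symmetric e -> connected_graph e -> 2 < #|T| ->
  exists x a b, [/\ e x a, e x b & a != b].
Proof.
move=> sym conn hT.
case: (boolP [exists x, exists a, exists b, [&& e x a, e x b & a != b]]).
  by move=> /existsP[x /existsP[a /existsP[b /and3P[xa xb ab]]]]; exists x, a, b.
move=> none; suff : #|T| <= 2 by rewrite leqNgt hT.
apply: card_le2_of_max_degree1 => // v a b va vb; apply/eqP; apply: contraNT none => ab.
by apply/existsP; exists v; apply/existsP; exists a; apply/existsP; exists b; rewrite va vb.
Qed.

Definition rdf_cond (T : finType) (e : rel T) (h : labelling T) (v : T) : bool :=
  #|AN e h v| + 3 <= hw h (ANc e h v).

Section RdfCond.

Variables (T : finType) (e : rel T) (h : labelling T) (v : T).
Hypothesis irr : irreflexive e.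

Lemma hw_ANc_ge (X : {set T}) :
  X \subset AN e h v -> #|AN e h v| + h v + \sum_(w in X) (h w - 1) <= hw h (ANc e h v).
Proof.
move=> sub; rewrite /hw /ANc big_setU1 /=; last by rewrite inE irr.
have -> : \sum_(u in AN e h v) (h u : nat) = \sum_(u in AN e h v) (h u - 1) + #|AN e h v|.
  rewrite -sum1_card -big_split /=; apply: eq_bigr => u.
  by rewrite inE => /andP[_ hu]; rewrite subnK.
have : \sum_(w in X) (h w - 1) <= \sum_(u in AN e h v) (h u - 1).
  by rewrite [X in _ <= X](big_setID X) /= (setIidPr sub) leq_addr.
lia.
Qed.

Lemma rdf_cond_two a b :
  a != b -> e v a -> e v b -> 3 <= h a -> 3 <= h b -> rdf_cond e h v.
Proof.
move=> ab va vb ha hb.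
have sub : [set a; b] \subset AN e h v.
  by apply/subsetP => w; rewrite !inE => /orP[]/eqP->; apply/andP; split => //; lia.
have := hw_ANc_ge sub; rewrite big_setU1 ?inE //= big_set1 /rdf_cond; lia.
Qed.

Lemma rdf_cond_one u : e v u -> 1 <= h u -> 3 <= h v + (h u - 1) -> rdf_cond e h v.
Proof.
move=> vu hu huv.
have sub : [set u] \subset AN e h v by rewrite sub1set inE vu.
have := hw_ANc_ge sub; rewrite big_set1 /rdf_cond; lia.
Qed.

End RdfCond.

Definition class_label (k : nat) (has_child : bool) : nat :=
  match k with
  | 0 => if has_child then 4 else 3
  | 1 => 0
  | 2 => 3
  | _ => if has_child then 0 else 1
  end.

Lemma class_label_lt5 k c : class_label k c < 5.
Proof. by case: k => [|[|[|k]]]; case: c. Qed.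

Lemma class_label_lt3 k c : k < 4 -> (class_label k c < 3) = odd k.
Proof. by case: k => [|[|[|[|k]]]] //; case: c. Qed.

Lemma class_label_sum n c : \sum_(r < 4) class_label ((n + r) %% 4) c = 7.
Proof.
rewrite !big_ord_recr big_ord0 /= -!(modnDml n).
have : n %% 4 < 4 by rewrite ltn_pmod.
by case: (n %% 4) => [|[|[|[|k]]]] //; case: c.
Qed.

Section LayerLabelling.

Variables (T : finType) (e : rel T) (x : T).

Fixpoint ball (n : nat) : {set T} :=
  if n is n'.+1 then ball n' :|: [set y | [exists z in ball n', e z y]] else [set x].

Lemma ball_last (p : seq T) : path e x p -> last x p \in ball (size p).
Proof.
elim/last_ind: p => [|p z IH]; first by rewrite /= inE.
rewrite rcons_path last_rcons size_rcons => /andP[ep ez].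
by rewrite /= !inE; apply/orP; right; apply/existsP; exists (last x p); rewrite IH.
Qed.

Hypothesis conn : forall y, connect e x y.

Lemma ball_exhaustive y : exists n, y \in ball n.
Proof. by have /connectP[p ep ->] := conn y; exists (size p); apply: ball_last. Qed.

Definition dist (y : T) : nat := ex_minn (ball_exhaustive y).

Lemma dist_min y n : y \in ball n -> dist y <= n.
Proof. by rewrite /dist; case: ex_minnP => m _; apply. Qed.

Lemma mem_ball_dist y : y \in ball (dist y).
Proof. by rewrite /dist; case: ex_minnP. Qed.

Lemma dist_eq0 y : (dist y == 0) = (y == x).
Proof.
apply/eqP/eqP => [d0|->]; first by have := mem_ball_dist y; rewrite d0 inE => /eqP.
by apply/eqP; rewrite -leqn0 dist_min //= inE.
Qed.

Lemma dist_edge u y : e u y -> dist y <= (dist u).+1.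
Proof.
move=> uy; apply: dist_min; rewrite /= !inE; apply/orP; right.
by apply/existsP; exists u; rewrite mem_ball_dist.
Qed.

Hypothesis sym : symmetric e.

Lemma dist_parent y : 0 < dist y -> exists2 u, e y u & (dist u).+1 = dist y.
Proof.
have := mem_ball_dist y; case def_d: (dist y) => [|n] //= + _; rewrite !inE.
case/orP => [/dist_min|/existsP[z /andP[zn zy]]]; first lia.
exists z; first by rewrite sym.
by have := dist_min zn; have := dist_edge zy; lia.
Qed.

Definition has_child (y : T) : bool := [exists w, e y w && (dist w == (dist y).+1)].

Definition layer_labelling (r : nat) : labelling T :=
  [ffun y => inord (class_label ((dist y + r) %% 4) (has_child y))].

Lemma layer_labellingE r y :
  (layer_labelling r y : nat) = class_label ((dist y + r) %% 4) (has_child y).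
Proof. by rewrite ffunE inordK // class_label_lt5. Qed.

Lemma sum_weight_layer_labellings : \sum_(r < 4) weight (layer_labelling r) = 7 * #|T|.
Proof.
rewrite /weight /hw exchange_big /= (eq_bigr (fun _ => 7)) => [|y _].
  by rewrite sum_nat_const cardsT mulnC.
under eq_bigr do rewrite layer_labellingE; exact: class_label_sum.
Qed.

Lemma layer_labelling_lt3 r y : (layer_labelling r y < 3) = odd ((dist y + r) %% 4).
Proof. by rewrite layer_labellingE class_label_lt3 // ltn_pmod. Qed.

Hypothesis irr : irreflexive e.

Lemma rdf_cond_nonroot r y :
  y != x -> layer_labelling r y < 3 -> rdf_cond e (layer_labelling r) y.
Proof.
rewrite -dist_eq0 -lt0n layer_labelling_lt3 => /dist_parent[u yu du] odd_y.
have u_child : has_child u by apply/existsP; exists y; rewrite sym yu du eqxx.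
have [u_odd|u_even] := boolP (odd ((dist u + r) %% 4)); first lia.
have hu := layer_labellingE r u; have hy := layer_labellingE r y.
rewrite u_child in hu.
have [y1|y3] : (dist y + r) %% 4 = 1 \/ (dist y + r) %% 4 = 3 by lia.
  have u0 : (dist u + r) %% 4 = 0 by lia.
  by apply: (rdf_cond_one irr yu); rewrite hu ?hy u0 ?y1.
have u2 : (dist u + r) %% 4 = 2 by lia.
case y_child: (has_child y) in hy.
- move/existsP: y_child => [w /andP[yw /eqP dw]].
  have uw : u != w by apply/eqP => uw; rewrite uw in du; lia.
  apply: (rdf_cond_two irr uw yu yw); first by rewrite hu u2.
  by rewrite leqNgt layer_labelling_lt3; lia.
- by apply: (rdf_cond_one irr yu); rewrite hu ?hy u2 ?y3.
Qed.

Lemma dist_root_nbr c : e x c -> dist c = 1.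
Proof.
move=> xc; have := dist_edge xc; have /eqP -> : dist x == 0 by rewrite dist_eq0.
case: (posnP (dist c)) => [/eqP|]; last lia.
by rewrite dist_eq0 => /eqP cx; rewrite cx irr in xc.
Qed.

Variables a b : T.
Hypotheses (xa : e x a) (xb : e x b) (ab : a != b).

Lemma rdf_cond_root r : layer_labelling r x < 3 -> rdf_cond e (layer_labelling r) x.
Proof.
have /eqP dist_x : dist x == 0 by rewrite dist_eq0.
rewrite layer_labelling_lt3 dist_x => odd_x.
by apply: (rdf_cond_two irr ab xa xb);
  rewrite leqNgt layer_labelling_lt3 dist_root_nbr //; lia.
Qed.

Lemma layer_labelling_is3RDF r : is3RDF e (layer_labelling r).
Proof.
apply/forallP => y; apply/implyP; case: (eqVneq y x) => [->|yx].
  exact: rdf_cond_root.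
exact: rdf_cond_nonroot.
Qed.

End LayerLabelling.

Theorem theorem13 (T : finType) (e : rel T) :
  is_tree e -> 3 <= #|T| -> 4 * gamma3R e <= 7 * #|T|.
Proof.
move=> [[sym irr] conn _] hT.
have [x [a [b [xa xb ab]]]] := exists_two_neighbours sym conn hT.
rewrite -(sum_weight_layer_labellings (conn x)).
apply: gamma3R_mul_le_sum => r.
exact: (layer_labelling_is3RDF (conn x) sym irr xa xb ab r).
Qed.
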